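(* Let $0<\mu<L$, $\kappa=L/\mu$, and let $m(z)=z^n+\sum_{i=0}^{n-1}m_iz^i\in\mathbb{R}[z]$ be monic of degree $n\ge1$ with all roots on the unit circle. Let $d(z)\in\mathbb{R}[z]$ with $\deg d<n$, and let $\rho\in(0,1)$ be such that for every $\lambda\in[\mu,L]$, all roots of $p_\lambda(z)=m(z)-\lambda d(z)$ lie in the closed disk $\{z:|z|\le\rho\}$. Then $$\rho\ \ge\ \rho_{\mathrm{TV}}:=\Bigl(\frac{\kappa-1}{\kappa+1}\Bigr)^{1/n}.$$ Equivalently, the worst-case convergence rate (over all symmetric $A$ with eigenvalues in $[\mu,L]$ and all $b$ with model $m$) of any minimal-order optimization filter $C(z)=\frac{d(z)}{m(z)}I_d$ that asymptotically tracks the minimizer is at least $\rho_{\mathrm{TV}}$.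
   Context: Setting: objective $f_k(x)=\tfrac12x^\top Ax+b_k^\top x$, iterates with $\mathcal{Z}$-transform $X(z)=C(z)(AX(z)+B(z))$, where $B(z)=B_N(z)/m(z)$ is the $\mathcal{Z}$-transform of $\{b_k\}$; convergence rate is $\limsup_k\|x_k-x_k^\star\|^{1/k}$ with $x_k^\star=-A^{-1}b_k$. For the filter $C(z)=\frac{d(z)}{m(z)}I_d$, the closed-loop poles are the roots of $m(z)-\lambda d(z)$ for $\lambda$ ranging over the eigenvalues of $A$. *)

From mathcomp Require Import all_boot all_order all_algebra.
From mathcomp Require Import all_classical all_reals all_analysis.
From mathcomp Require Export complex.

From mathcomp Require Import all_boot all_order all_algebra.
From mathcomp Require Import all_classical all_reals all_analysis.
From mathcomp Require Import complex.
From mathcomp Require Import ring.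
Import Order.TTheory GRing.Theory Num.Theory.
Local Open Scope ring_scope.
Local Open Scope complex_scope.

(* By Vieta, the constant coefficient of a monic polynomial has modulus equal
   to the product of the moduli of its roots.  Hence |m(0)| = 1, while
   |p_lam(0)| <= rho^n for every lam in [mu, L].  Since
   (L - mu) m(0) = L p_mu(0) - mu p_L(0) does not involve d(0), we get
   L - mu <= (L + mu) rho^n, i.e. rho^n >= (kappa - 1) / (kappa + 1). *)

Section MonicRoots.
Variables (C : numClosedFieldType) (p : {poly C}).
Hypothesis p_monic : p \is monic.

Lemma monic_horner0_norm_prod : exists r : seq C,
  [/\ size r = (size p).-1, {in r, forall z, root p z}
    & `|p.[0]| = \prod_(z <- r) `|z|].
Proof.
have [r def_p] := closed_field_poly_normal p.
rewrite (monicP p_monic) scale1r in def_p.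
exists r; split.
- by rewrite def_p size_prod_XsubC.
- by move=> z zr; rewrite def_p root_prod_XsubC.
- rewrite def_p horner_prod normr_prod; apply: eq_bigr => z _.
  by rewrite hornerXsubC sub0r normrN.
Qed.

Lemma monic_horner0_norm_le (B : C) : 0 <= B ->
  (forall z, root p z -> `|z| <= B) -> `|p.[0]| <= B ^+ (size p).-1.
Proof.
move=> B_ge0 rootsB; have [r [<- r_roots ->]] := monic_horner0_norm_prod.
have -> : B ^+ size r = \prod_(z <- r) B.
  by elim: r {r_roots} => [|z r IHr]; rewrite ?big_nil ?big_cons ?exprS ?IHr.
rewrite !big_seq; apply: ler_prod => z zr.
by rewrite normr_ge0 rootsB ?r_roots.
Qed.

Lemma monic_horner0_norm_eq1 :
  (forall z, root p z -> `|z| = 1) -> `|p.[0]| = 1.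
Proof.
move=> roots1; have [r [_ r_roots ->]] := monic_horner0_norm_prod.
by rewrite big_seq big1 // => z zr; rewrite roots1 ?r_roots.
Qed.

End MonicRoots.

Lemma monicDl (R : nzRingType) (p q : {poly R}) :
  (size q < size p)%N -> p \is monic -> p + q \is monic.
Proof. by move=> ltqp p_monic; rewrite monicE lead_coefDl // (monicP p_monic). Qed.

Lemma norm_real_complex (R : rcfType) (x : R) : `|x%:C| = `|x|%:C.
Proof. by rewrite normc_def /= expr0n /= addr0 sqrtr_sqr. Qed.

Lemma horner0_norm_real_complex (R : rcfType) (q : {poly R}) :
  `|(map_poly (real_complex R) q).[0]| = `|q.[0]|%:C.
Proof. by rewrite -(rmorph0 (real_complex R)) horner_map norm_real_complex. Qed.

Lemma sub_ratio_le_of_two_bounds [R : realFieldType] [mu L a b r : R] :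
  0 < mu -> mu < L -> `|a| = 1 ->
  `|a - mu * b| <= r -> `|a - L * b| <= r -> (L - mu) / (L + mu) <= r.
Proof.
move=> mu_gt0 muL a1 bd_mu bd_L.
have L_gt0 : 0 < L := lt_trans mu_gt0 muL.
have Lmu_gt0 : 0 < L - mu by rewrite subr_gt0.
rewrite ler_pdivrMr ?addr_gt0 // -[L - mu]mulr1 -a1 -(gtr0_norm Lmu_gt0) -normrM.
have -> : (L - mu) * a = L * (a - mu * b) - mu * (a - L * b) by ring.
apply: (le_trans (ler_normB _ _)).
rewrite !normrM (gtr0_norm mu_gt0) (gtr0_norm L_gt0) (mulrC r) mulrDl.
by apply: lerD; rewrite ler_wpM2l // ltW.
Qed.

Lemma powR_invn_le (R : realType) (x r : R) (n : nat) : (0 < n)%N ->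
  0 <= x -> 0 <= r -> x <= r ^+ n -> x `^ n%:R^-1 <= r.
Proof.
move=> n_gt0 x_ge0 r_ge0 xr.
apply: (le_trans (ge0_ler_powR _ _ _ xr)); rewrite ?nnegrE ?exprn_ge0 //.
rewrite -powR_mulrn // -powRrM mulfV ?pnatr_eq0 -?lt0n // powRr1 //.
Qed.

Theorem theorem1 (R : realType) (mu L rho : R) (n : nat) (m d : {poly R}) :
  0 < mu -> mu < L ->
  (0 < n)%N -> size m = n.+1 -> m \is monic ->
  (forall z : R[i], root (map_poly (real_complex R) m) z -> `|z| = 1) ->
  (size d <= n)%N ->
  0 < rho < 1 ->
  (forall lam : R, mu <= lam <= L ->
     forall z : R[i], root (map_poly (real_complex R) (m - lam *: d)) z ->
       `|z| <= (rho%:C)) ->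
  ((L / mu - 1) / (L / mu + 1)) `^ (n%:R^-1) <= rho.
Proof.
move=> mu_gt0 muL n_gt0 size_m m_monic m_roots size_d /andP[rho_gt0 _] p_roots.
have L_gt0 : 0 < L := lt_trans mu_gt0 muL.
have m0 : `|m.[0]| = 1.
  apply: (@complexI R); rewrite -horner0_norm_real_complex.
  by apply: monic_horner0_norm_eq1; rewrite ?map_monic.
have p0 lam : mu <= lam <= L -> `|m.[0] - lam * d.[0]| <= rho ^+ n.
  move=> lam_mu_L; rewrite -lecR -hornerZ -hornerN -hornerD -horner0_norm_real_complex.
  have size_dlam : (size (- (lam *: d)) < size m)%N.
    by rewrite size_polyN size_m ltnS (leq_trans (size_scale_leq _ _)).
  have -> : n = (size (map_poly (real_complex R) (m - lam *: d))).-1.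
    by rewrite size_map_poly size_polyDl // size_m.
  rewrite rmorphXn; apply: monic_horner0_norm_le; rewrite ?map_monic ?monicDl //.
    by rewrite lecR ltW.
  exact: p_roots.
have -> : (L / mu - 1) / (L / mu + 1) = (L - mu) / (L + mu).
  by field; rewrite ?gt_eqF ?addr_gt0 ?divr_gt0.
apply: powR_invn_le => //.
- by apply: divr_ge0; apply: ltW; rewrite ?subr_gt0 ?addr_gt0.
- exact: ltW.
apply: (sub_ratio_le_of_two_bounds mu_gt0 muL m0); apply: p0;
  by rewrite lexx (ltW muL).
Qed.
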